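(* Let $k\ge2$, let $G$ be a countably infinite one-way $k$-locally finite graph, and let $H$ be a countable graph with a partition $\{U_1,\dots,U_k\}$ of $V(H)$ into infinite sets such that for every $i\in[k]$ and every finite $W\subseteq U_1\cup\dots\cup U_{i-1}$, the set of vertices in $U_i$ adjacent to every vertex of $W$ is infinite. Then there is an embedding $f$ of $G$ into $H$ (an injective map $V(G)\to V(H)$ sending edges to edges) with $U_1\subseteq f(V(G))$.
   Context: A graph $G$ is one-way $k$-locally finite ($k\ge2$) if there is a partition of $V(G)$ into $k$ independent sets $V_1,\dots,V_k$ with $|V_1|\geq\dots\geq|V_k|$ such that for all $1\le i<j\le k$ and all $v\in V_j$, $v$ has only finitely many neighbors in $V_i$. *)

From Stdlib Require Import List Arith.

Definition simple_graph (V : Type) (adj : V -> V -> Prop) : Prop :=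
  (forall x y, adj x y -> adj y x) /\ (forall x, ~ adj x x).

Definition finite_set {V : Type} (P : V -> Prop) : Prop :=
  exists l : list V, forall x, P x -> In x l.

Definition infinite_set {V : Type} (P : V -> Prop) : Prop := ~ finite_set P.

Definition countable (V : Type) : Prop :=
  exists g : V -> nat, forall x y, g x = g y -> x = y.

Definition countably_infinite (V : Type) : Prop :=
  exists e : nat -> V,
    (forall m n, e m = e n -> m = n) /\ (forall x, exists n, e n = x).

Definition card_ge {V : Type} (A B : V -> Prop) : Prop :=
  exists f : V -> V,
    (forall x, B x -> A (f x)) /\
    (forall x y, B x -> B y -> f x = f y -> x = y).

(* One-way k-locally finite graph. The partition V_1,...,V_k is encoded by
   a colouring c : V -> nat with c v < k; block V_{i+1} = {v | c v = i}
   (0-indexed). Blocks of a partition are nonempty. *)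
Definition one_way_locally_finite (k : nat) (V : Type) (adj : V -> V -> Prop)
  : Prop :=
  exists c : V -> nat,
    (forall v, c v < k) /\
    (forall i, i < k -> exists v, c v = i) /\
    (forall u v, adj u v -> c u <> c v) /\
    (forall i j, i <= j -> j < k ->
       card_ge (fun v => c v = i) (fun v => c v = j)) /\
    (forall i j v, i < j -> j < k -> c v = j ->
       finite_set (fun u => c u = i /\ adj v u)).

From Stdlib Require Import List Arith Lia Classical ClassicalEpsilon.

(* The embedding is built by a back-and-forth construction.  A partial
   embedding is a finite list of pairs (x, y) with x in G and y in H that is
   injective, edge-preserving, sends the class V_{i+1} of x into U_{i+1}, and is
   closed downwards: with a placed vertex, its (finitely many) neighbours in
   lower classes are placed as well.  Two extension steps keep this invariant:
   - forth: any vertex of G can be placed, by induction on its class: place its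
     lower neighbours first; their images lie in lower classes of H, so the
     extension property of H offers infinitely many candidates for the vertex;
   - back: any vertex of U_1 can be covered by a fresh vertex of V_1, which is
     infinite because every class injects into it.
   Alternating both steps along enumerations of V(G) and V(H) gives an
   increasing chain of partial embeddings whose union is the required map. *)

Lemma infinite_avoids_list {A : Type} (P : A -> Prop) :
  infinite_set P -> forall l : list A, exists x, P x /\ ~ In x l.
Proof.
  intros Hinf l. apply NNPP. intros Hno. apply Hinf. exists l.
  intros x Px. apply NNPP. intros Hx. apply Hno. eauto.
Qed.

Lemma finite_injective_preimage {A B : Type} (P : A -> Prop) (Q : B -> Prop)
  (f : A -> B) :
  (forall x, P x -> Q (f x)) ->
  (forall x y, P x -> P y -> f x = f y -> x = y) ->
  finite_set Q -> finite_set P.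
Proof.
  intros HPQ Hinj [l Hl].
  assert (Hmap : forall x, P x -> In (f x) l) by auto.
  clear HPQ Hl. revert P Hinj Hmap.
  induction l as [|b l IH]; intros P Hinj Hmap.
  - exists nil. intros x Px. destruct (Hmap x Px).
  - destruct (classic (exists x0, P x0 /\ f x0 = b)) as [[x0 [Px0 Hx0]] | Hno].
    + destruct (IH (fun x => P x /\ f x <> b)) as [l' Hl'].
      * intros x y [Px _] [Py _]. apply Hinj; assumption.
      * intros x [Px Hxb]. destruct (Hmap x Px) as [E | I]; [congruence | exact I].
      * exists (x0 :: l'). intros x Px. destruct (classic (f x = b)) as [E | N].
        -- left. apply Hinj; auto; congruence.
        -- right. apply Hl'. split; assumption.
    + apply IH; [exact Hinj |]. intros x Px.
      destruct (Hmap x Px) as [E | I]; [| exact I].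
      exfalso. apply Hno. eauto.
Qed.

Lemma finite_bounded_union {A : Type} (P : nat -> A -> Prop) (n : nat) :
  (forall i, i < n -> finite_set (P i)) ->
  finite_set (fun x => exists i, i < n /\ P i x).
Proof.
  induction n as [|n IH]; intros Hfin.
  - exists nil. intros x [i [Hi _]]. lia.
  - destruct IH as [l Hl]; [intros i Hi; apply Hfin; lia |].
    destruct (Hfin n (Nat.lt_succ_diag_r n)) as [l' Hl'].
    exists (l ++ l'). intros x [i [Hi Px]]. apply in_or_app.
    destruct (Nat.eq_dec i n) as [-> | Hne].
    + right. exact (Hl' x Px).
    + left. apply Hl. exists i. split; [lia | exact Px].
Qed.

Lemma nat_not_finite : ~ finite_set (fun _ : nat => True).
Proof.
  intros [l Hl].
  assert (Hmax : forall n, In n l -> n <= list_max l).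
  { apply Forall_forall, list_max_le, Nat.le_refl. }
  pose proof (Hmax _ (Hl (S (list_max l)) I)). lia.
Qed.

Lemma countably_infinite_not_finite (V : Type) :
  countably_infinite V -> ~ finite_set (fun _ : V => True).
Proof.
  intros [e [einj _]] Hfin. apply nat_not_finite.
  apply (finite_injective_preimage _ (fun _ : V => True) e); auto.
Qed.

Lemma first_class_infinite (V : Type) (k : nat) (c : V -> nat) :
  countably_infinite V -> (forall v, c v < k) ->
  (forall j, j < k -> card_ge (fun v => c v = 0) (fun v => c v = j)) ->
  infinite_set (fun v => c v = 0).
Proof.
  intros HV hck hcard H0. apply (countably_infinite_not_finite V HV).
  destruct (finite_bounded_union (fun j v => c v = j) k) as [l Hl].
  { intros j Hj. destruct (hcard j Hj) as [f [Hf Hinj]].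
    exact (finite_injective_preimage _ _ f Hf Hinj H0). }
  exists l. intros v _. apply Hl. exists (c v). auto.
Qed.

Lemma invariant_chain {A : Type} (Inv : A -> Prop) (R : nat -> A -> A -> Prop)
  (a0 : A) :
  Inv a0 -> (forall n a, Inv a -> exists b, Inv b /\ R n a b) ->
  exists chain : nat -> A,
    forall n, Inv (chain n) /\ R n (chain n) (chain (S n)).
Proof.
  intros H0 Hstep.
  destruct (choice (fun (p : nat * {a | Inv a}) (b : {a | Inv a}) =>
                      R (fst p) (proj1_sig (snd p)) (proj1_sig b)))
    as [next Hnext].
  { intros [n [a Ha]]. destruct (Hstep n a Ha) as [b [Hb HR]].
    exists (exist _ b Hb). exact HR. }
  pose (ch := fix ch n : {a | Inv a} :=
          match n with 0 => exist _ a0 H0 | S m => next (m, ch m) end).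
  exists (fun n => proj1_sig (ch n)). intros n.
  split; [exact (proj2_sig (ch n)) | exact (Hnext (n, ch n))].
Qed.

Section PartialEmbeddings.

Variables (VG VH : Type) (adjG : VG -> VG -> Prop) (adjH : VH -> VH -> Prop).
Variables (k : nat) (c : VG -> nat) (U : VH -> nat).

Hypothesis symG : forall x y, adjG x y -> adjG y x.
Hypothesis symH : forall x y, adjH x y -> adjH y x.
Hypothesis hcol : forall u v, adjG u v -> c u <> c v.
Hypothesis hck : forall v, c v < k.
Hypothesis hfin : forall i j v, i < j -> j < k -> c v = j ->
  finite_set (fun u => c u = i /\ adjG v u).
Hypothesis hUext : forall i, i < k ->
  forall W : VH -> Prop, finite_set W -> (forall w, W w -> U w < i) ->
    infinite_set (fun u => U u = i /\ forall w, W w -> adjH w u).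
Hypothesis hG0 : infinite_set (fun v => c v = 0).

Definition dom (s : list (VG * VH)) (x : VG) : Prop := exists y, In (x, y) s.
Definition img (s : list (VG * VH)) (y : VH) : Prop := exists x, In (x, y) s.

Lemma dom_incl s s' x : incl s s' -> dom s x -> dom s' x.
Proof. intros H [y Hy]. exists y. auto. Qed.

Record partial_embedding (s : list (VG * VH)) : Prop := {
  pe_functional : forall x y y', In (x, y) s -> In (x, y') s -> y = y';
  pe_injective : forall x x' y, In (x, y) s -> In (x', y) s -> x = x';
  pe_colour : forall x y, In (x, y) s -> U y = c x;
  pe_edges : forall x y x' y',
    In (x, y) s -> In (x', y') s -> adjG x x' -> adjH y y';
  pe_down_closed : forall x z, dom s x -> adjG x z -> c z < c x -> dom s z
}.

Lemma pe_nil : partial_embedding nil.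
Proof. constructor; try (intros; contradiction). intros x z [y []]. Qed.

Lemma pe_extend s v y :
  partial_embedding s -> ~ dom s v ->
  (forall z, adjG v z -> c z < c v -> dom s z) ->
  ~ img s y -> U y = c v ->
  (forall z w, In (z, w) s -> adjG v z -> c z < c v -> adjH w y) ->
  partial_embedding ((v, y) :: s).
Proof.
  intros [Hfun Hinj Hcol Hedge Hdown] Hv Hlow Hy HUy Hadj.
  (* Placed neighbours of v lie in lower classes: a higher one would force v
     into the domain by downward closure, an equal one contradicts properness. *)
  assert (Hbelow : forall z w, In (z, w) s -> adjG v z -> c z < c v).
  { intros z w Hz Hvz.
    destruct (lt_eq_lt_dec (c z) (c v)) as [[Hlt | Heq] | Hgt].
    - exact Hlt.
    - exfalso. exact (hcol v z Hvz (eq_sym Heq)).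
    - exfalso. apply Hv. apply (Hdown z v); [exists w; exact Hz | auto | exact Hgt]. }
  constructor.
  - intros x y1 y2 [E1 | I1] [E2 | I2].
    + inversion E1; inversion E2; congruence.
    + inversion E1; subst. exfalso. apply Hv. exists y2. exact I2.
    + inversion E2; subst. exfalso. apply Hv. exists y1. exact I1.
    + exact (Hfun x y1 y2 I1 I2).
  - intros x1 x2 w [E1 | I1] [E2 | I2].
    + inversion E1; inversion E2; congruence.
    + inversion E1; subst. exfalso. apply Hy. exists x2. exact I2.
    + inversion E2; subst. exfalso. apply Hy. exists x1. exact I1.
    + exact (Hinj x1 x2 w I1 I2).
  - intros x w [E | I].
    + inversion E; subst. exact HUy.
    + exact (Hcol x w I).
  - intros x1 y1 x2 y2 [E1 | I1] [E2 | I2] Hx.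
    + inversion E1; inversion E2; subst. exfalso. exact (hcol x2 x2 Hx eq_refl).
    + inversion E1; subst. apply symH. exact (Hadj x2 y2 I2 Hx (Hbelow x2 y2 I2 Hx)).
    + inversion E2; subst. apply symG in Hx.
      exact (Hadj x1 y1 I1 Hx (Hbelow x1 y1 I1 Hx)).
    + exact (Hedge x1 y1 x2 y2 I1 I2 Hx).
  - intros x z [w [E | I]] Hxz Hlt.
    + inversion E; subst. destruct (Hlow z Hxz Hlt) as [w' Hw'].
      exists w'. right. exact Hw'.
    + destruct (Hdown x z (ex_intro _ w I) Hxz Hlt) as [w' Hw'].
      exists w'. right. exact Hw'.
Qed.

(* A vertex whose lower neighbours are all placed can be placed itself: their
   finitely many images lie in lower classes of H, so the extension property
   gives infinitely many common neighbours of them in U_{c v}. *)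
Lemma pe_extend_vertex s v :
  partial_embedding s -> ~ dom s v ->
  (forall z, adjG v z -> c z < c v -> dom s z) ->
  exists y, partial_embedding ((v, y) :: s).
Proof.
  intros Hs Hv Hlow.
  pose (W := fun w => exists z, In (z, w) s /\ adjG v z /\ c z < c v).
  assert (HWfin : finite_set W).
  { exists (map snd s). intros w [z [I _]]. exact (in_map snd _ _ I). }
  assert (HWlow : forall w, W w -> U w < c v).
  { intros w [z [I [_ Hlt]]]. rewrite (pe_colour _ Hs z w I). exact Hlt. }
  destruct (infinite_avoids_list _ (hUext (c v) (hck v) W HWfin HWlow) (map snd s))
    as [y [[HUy HWy] Hy]].
  exists y. apply pe_extend; try assumption.
  - intros [x I]. apply Hy. exact (in_map snd _ _ I).
  - intros z w I Hz Hlt. apply HWy. exists z. auto.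
Qed.

Lemma pe_cover_list (P : VG -> Prop) :
  (forall v s, P v -> partial_embedding s ->
     exists s', partial_embedding s' /\ incl s s' /\ dom s' v) ->
  forall l s, partial_embedding s ->
  exists s', partial_embedding s' /\ incl s s' /\
    forall z, In z l -> P z -> dom s' z.
Proof.
  intros Hplace l. induction l as [|a l IH]; intros s Hs.
  - exists s. split; [exact Hs | split; [apply incl_refl | intros z []]].
  - destruct (IH s Hs) as [s1 [Hs1 [Hincl1 Hcov1]]].
    destruct (classic (P a)) as [Ha | Ha].
    + destruct (Hplace a s1 Ha Hs1) as [s2 [Hs2 [Hincl2 Ha2]]].
      exists s2. split; [exact Hs2 | split; [eapply incl_tran; eauto |]].
      intros z [<- | Iz] Hz; [exact Ha2 | eapply dom_incl; eauto].
    + exists s1. split; [exact Hs1 | split; [exact Hincl1 |]].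
      intros z [<- | Iz] Hz; [contradiction | auto].
Qed.

Lemma pe_extend_domain v s : partial_embedding s ->
  exists s', partial_embedding s' /\ incl s s' /\ dom s' v.
Proof.
  revert v s.
  assert (Hbound : forall n v s, c v < n -> partial_embedding s ->
            exists s', partial_embedding s' /\ incl s s' /\ dom s' v).
  { induction n as [|n IH]; intros v s Hv Hs; [lia |].
    destruct (finite_bounded_union (fun i z => c z = i /\ adjG v z) (c v))
      as [L HL].
    { intros i Hi. exact (hfin i (c v) v Hi (hck v) eq_refl). }
    destruct (pe_cover_list (fun z => c z < n) (fun z s0 Hz Hs0 => IH z s0 Hz Hs0) L s Hs)
      as [s1 [Hs1 [Hincl Hcov]]].
    assert (Hlow : forall z, adjG v z -> c z < c v -> dom s1 z).
    { intros z Hz Hlt. apply Hcov; [apply HL; exists (c z); auto | lia]. }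
    destruct (classic (dom s1 v)) as [Hv1 | Hv1].
    - exists s1. auto.
    - destruct (pe_extend_vertex s1 v Hs1 Hv1 Hlow) as [y Hy].
      exists ((v, y) :: s1). split; [exact Hy | split].
      + apply incl_tl. exact Hincl.
      + exists y. left. reflexivity. }
  intros v s. exact (Hbound (S (c v)) v s (Nat.lt_succ_diag_r _)).
Qed.

(* Back: every vertex of U_1 can be covered, using a fresh vertex of V_1,
   which has no lower neighbours to respect. *)
Lemma pe_extend_image s u : partial_embedding s -> U u = 0 ->
  exists s', partial_embedding s' /\ incl s s' /\ img s' u.
Proof.
  intros Hs Hu. destruct (classic (img s u)) as [Hin | Hout].
  - exists s. split; [exact Hs | split; [apply incl_refl | exact Hin]].
  - destruct (infinite_avoids_list _ hG0 (map fst s)) as [v [Hv0 Hv]].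
    exists ((v, u) :: s). split; [| split].
    + apply pe_extend; try assumption.
      * intros [y I]. apply Hv. exact (in_map fst _ _ I).
      * intros z _ Hlt. lia.
      * congruence.
      * intros z w _ _ Hlt. lia.
    + apply incl_tl, incl_refl.
    + exists v. left. reflexivity.
Qed.

Lemma pe_back_and_forth (g : VH -> nat) (ginj : forall x y, g x = g y -> x = y)
  s v n : partial_embedding s ->
  exists s', partial_embedding s' /\ incl s s' /\ dom s' v /\
    forall u, g u = n -> U u = 0 -> img s' u.
Proof.
  intros Hs. destruct (pe_extend_domain v s Hs) as [s1 [Hs1 [Hincl1 Hv1]]].
  destruct (classic (exists u, g u = n /\ U u = 0)) as [[u [Hgu Hu]] | Hnone].
  - destruct (pe_extend_image s1 u Hs1 Hu) as [s2 [Hs2 [Hincl2 Hu2]]].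
    exists s2. split; [exact Hs2 | split; [eapply incl_tran; eauto | split]].
    + eapply dom_incl; eauto.
    + intros u' Hgu' _. rewrite (ginj u' u) by congruence. exact Hu2.
  - exists s1. split; [exact Hs1 | split; [exact Hincl1 | split; [exact Hv1 |]]].
    intros u Hgu Hu. exfalso. apply Hnone. eauto.
Qed.

Lemma pe_chain_limit (chain : nat -> list (VG * VH)) :
  (forall n, partial_embedding (chain n)) ->
  (forall n, incl (chain n) (chain (S n))) ->
  (forall x, exists n, dom (chain n) x) ->
  exists f : VG -> VH,
    (forall x y, f x = f y -> x = y) /\
    (forall x y, adjG x y -> adjH (f x) (f y)) /\
    (forall n u, img (chain n) u -> exists x, f x = u).
Proof.
  intros Hpe Hstep Hdom.
  assert (Hmono : forall n m, n <= m -> incl (chain n) (chain m)).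
  { intros n m Hle. induction Hle; [apply incl_refl | eapply incl_tran; eauto]. }
  (* any two placed pairs already occur together in a common stage *)
  assert (Hjoin : forall n m p q, In p (chain n) -> In q (chain m) ->
            In p (chain (max n m)) /\ In q (chain (max n m))).
  { intros n m p q Hp Hq. split; [apply (Hmono n) | apply (Hmono m)]; auto; lia. }
  destruct (choice (fun x y => exists n, In (x, y) (chain n))) as [f Hf].
  { intros x. destruct (Hdom x) as [n [y Hy]]. eauto. }
  exists f. split; [| split].
  - intros x y Hxy. destruct (Hf x) as [n Hx]. destruct (Hf y) as [m Hy].
    rewrite <- Hxy in Hy. destruct (Hjoin n m _ _ Hx Hy) as [Hx' Hy'].
    exact (pe_injective _ (Hpe _) x y (f x) Hx' Hy').
  - intros x y Hxy. destruct (Hf x) as [n Hx]. destruct (Hf y) as [m Hy].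
    destruct (Hjoin n m _ _ Hx Hy) as [Hx' Hy'].
    exact (pe_edges _ (Hpe _) x (f x) y (f y) Hx' Hy' Hxy).
  - intros n u [x Hx]. exists x. destruct (Hf x) as [m Hm].
    destruct (Hjoin m n _ _ Hm Hx) as [Hm' Hx'].
    exact (pe_functional _ (Hpe _) x _ _ Hm' Hx').
Qed.

End PartialEmbeddings.

Theorem mainTheorem19 (k : nat) (hk : 2 <= k)
  (VG : Type) (adjG : VG -> VG -> Prop)
  (VH : Type) (adjH : VH -> VH -> Prop)
  (hG : simple_graph VG adjG) (hGc : countably_infinite VG)
  (hGk : one_way_locally_finite k VG adjG)
  (hH : simple_graph VH adjH) (hHc : countable VH)
  (U : VH -> nat)
  (hU : forall u, U u < k)
  (hUinf : forall i, i < k -> infinite_set (fun u => U u = i))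
  (hUext : forall i, i < k ->
     forall W : VH -> Prop, finite_set W -> (forall w, W w -> U w < i) ->
       infinite_set (fun u => U u = i /\ forall w, W w -> adjH w u)) :
  exists f : VG -> VH,
    (forall x y, f x = f y -> x = y) /\
    (forall x y, adjG x y -> adjH (f x) (f y)) /\
    (forall u, U u = 0 -> exists x, f x = u).
Proof.
  destruct hGk as [c [hck [_ [hcol [hcard hfin]]]]].
  destruct hG as [symG _]. destruct hH as [symH _].
  pose proof (first_class_infinite VG k c hGc hck
                (fun j Hj => hcard 0 j (Nat.le_0_l j) Hj)) as hG0.
  destruct hGc as [e [_ esurj]]. destruct hHc as [g ginj].
  destruct (invariant_chain (partial_embedding VG VH adjG adjH c U)
              (fun n s s' => incl s s' /\ dom VG VH s' (e n) /\
                 forall u, g u = n -> U u = 0 -> img VG VH s' u) nil)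
    as [chain Hchain].
  { apply pe_nil. }
  { intros n s Hs.
    destruct (pe_back_and_forth VG VH adjG adjH k c U symG symH hcol hck hfin
                hUext hG0 g ginj s (e n) n Hs) as [s' [Hs' HR]].
    exists s'. split; assumption. }
  destruct (pe_chain_limit VG VH adjG adjH c U chain) as [f [Hinj [Hedge Himg]]].
  - intros n. apply Hchain.
  - intros n. apply Hchain.
  - intros x. destruct (esurj x) as [n <-]. exists (S n). apply Hchain.
  - exists f. split; [exact Hinj | split; [exact Hedge |]].
    intros u Hu. apply (Himg (S (g u))). apply (Hchain (g u)); auto.
Qed.
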